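(* Let $A\in\mathbb{R}^{m\times n}$, and let $p:[0,\infty)\to\mathbb{R}$ be concave, increasing and continuous with right derivative $p'(0+)>0$. For $x\in\mathbb{R}^n$ define $R(x)\in\mathbb{R}^n$ by $$R(x)_i=\mathrm{sgn}(x_i)\Big(1-\frac{d_i(x)}{p'(0+)}\Big),$$ where $d_i(x)=p'(0+)$ if $x_i=0$, and, if $x_i\neq0$, $d_i(x)$ is any element of the superdifferential $[p'_+(|x_i|),p'_-(|x_i|)]$ of the concave function $p$ at $|x_i|$ (one-sided derivatives). Given $\bar x\in\mathbb{R}^n$, consider the iteration $x^{(0)}=\mathbf{0}$ and $$x^{(k+1)}\in\arg\min_{x\in\mathbb{R}^n}\ \|x\|_1-\langle R(x^{(k)}),x\rangle\quad\text{s.t.}\quad Ax=A\bar x,\qquad k=0,1,2,\dots$$ Let $T\subseteq\{1,\dots,n\}$ be a fixed index set. Suppose that basis pursuit uniquely recovers every vector supported on $T$, i.e. for every $\bar x$ with $\{i:\bar x_i\neq0\}\subseteq T$, $\bar x$ is the unique solution of $\min_x\|x\|_1$ s.t. $Ax=A\bar x$. Then the iteration above also recovers every such $\bar x$: for every $\bar x$ supported on $T$ and every $k\ge 0$, the minimization problem defining $x^{(k+1)}$ has $\bar x$ as its unique solution, so $x^{(k)}=\bar x$ for all $k\ge1$.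
   Context: $\mathrm{sgn}(t)=t/|t|$ for $t\neq0$ and $\mathrm{sgn}(0)=0$. A vector is supported on $T$ if all its nonzero entries have indices in $T$. (When $x^{(0)}=\mathbf{0}$, $R(x^{(0)})=\mathbf{0}$, so the first step is basis pursuit.) *)

From HB Require Import structures.
From mathcomp Require Import all_boot all_order all_algebra.
From mathcomp Require Import all_classical all_reals all_analysis.
Set Implicit Arguments. Unset Strict Implicit. Unset Printing Implicit Defensive.
Import Order.TTheory GRing.Theory Num.Theory.
Import numFieldNormedType.Exports.
Local Open Scope classical_set_scope.
Local Open Scope ring_scope.

Section Defs.
Variable R : realType.

Definition concave_on_nonneg (p : R -> R) : Prop :=
  forall x y l : R, 0 <= x -> 0 <= y -> 0 <= l <= 1 ->
    l * p x + (1 - l) * p y <= p (l * x + (1 - l) * y).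

Definition increasing_on_nonneg (p : R -> R) : Prop :=
  forall x y : R, 0 <= x -> x <= y -> p x <= p y.

Definition right_deriv (p : R -> R) (t l : R) : Prop :=
  (fun h : R => (p (t + h) - p t) / h) @ 0^'+ --> l.

Definition left_deriv (p : R -> R) (t l : R) : Prop :=
  (fun h : R => (p (t + h) - p t) / h) @ 0^'- --> l.

Definition in_superdiff (p : R -> R) (t d : R) : Prop :=
  exists lr ll : R, [/\ right_deriv p t lr, left_deriv p t ll & lr <= d <= ll].

Definition admissible_d n (p : R -> R) (p0 : R) (x d : 'cV[R]_n) : Prop :=
  forall i : 'I_n,
    (x i 0 = 0 -> d i 0 = p0) /\ (x i 0 != 0 -> in_superdiff p `|x i 0| (d i 0)).

Definition Rmap n (p0 : R) (x d : 'cV[R]_n) : 'cV[R]_n :=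
  \col_i (Num.sg (x i 0) * (1 - d i 0 / p0)).

Definition l1norm n (x : 'cV[R]_n) : R := \sum_i `|x i 0|.

Definition inner n (u v : 'cV[R]_n) : R := \sum_i u i 0 * v i 0.

Definition supported_on n (x : 'cV[R]_n) (T : {set 'I_n}) : Prop :=
  forall i : 'I_n, x i 0 != 0 -> i \in T.

Definition is_minimizer n (f : 'cV[R]_n -> R) (C : 'cV[R]_n -> Prop) z : Prop :=
  C z /\ forall y, C y -> f z <= f y.

Definition is_unique_minimizer n (f : 'cV[R]_n -> R) (C : 'cV[R]_n -> Prop) z : Prop :=
  is_minimizer f C z /\ forall y, is_minimizer f C y -> y = z.

End Defs.

From HB Require Import structures.
From mathcomp Require Import all_boot all_order all_algebra.
From mathcomp Require Import all_classical all_reals all_analysis.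
From mathcomp Require Import ring lra.

Set Implicit Arguments.
Unset Strict Implicit.
Unset Printing Implicit Defensive.
Import Order.TTheory GRing.Theory Num.Theory.
Import numFieldNormedType.Exports.
Local Open Scope classical_set_scope.
Local Open Scope ring_scope.

(** Concavity and monotonicity of p force every superdifferential value at
  t > 0 into [0, p'(0+)], so every weight R(x)_i has modulus at most 1 and the
  sign of x_i.  Basis pursuit recovery on T gives the null space property
  ||h_T||_1 < ||h_{T^c}||_1 for all nonzero h in ker A, which shows that for
  any weight r with |r_i| <= 1, r_i xb_i >= 0 and r = 0 off T, xb is the unique
  minimizer of ||x||_1 - <r, x> on the affine space A x = A xb.  Hence if
  x^(k) is 0 or xb, then x^(k+1) = xb, and induction from x^(0) = 0 finishes
  the proof. *)

Section ConcaveSlopes.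
Variables (R : realType) (p : R -> R).
Hypothesis p_concave : concave_on_nonneg p.

Lemma concave_on_nonneg_chord (u v : R) : 0 <= u -> u <= v -> 0 < v ->
  (v - u) * p 0 + u * p v <= v * p u.
Proof.
move=> u_ge0 le_uv v_gt0.
have v_neq0 : v != 0 by rewrite gt_eqF.
have l_ge0 : 0 <= (v - u) / v by rewrite divr_ge0 ?subr_ge0 // ltW.
have l_le1 : (v - u) / v <= 1 by rewrite ler_pdivrMr // mul1r; lra.
have := p_concave (lexx 0) (ltW v_gt0) (introT andP (conj l_ge0 l_le1)).
have -> : (v - u) / v * 0 + (1 - (v - u) / v) * v = u by field.
move=> /(ler_wpM2r (ltW v_gt0)).
have -> : ((v - u) / v * p 0 + (1 - (v - u) / v) * p v) * v
          = (v - u) * p 0 + u * p v by field.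
by rewrite [p u * v]mulrC.
Qed.

Lemma concave_slope0_decreasing (u v : R) : 0 < u -> u <= v ->
  (p v - p 0) / v <= (p u - p 0) / u.
Proof.
move=> u_gt0 le_uv; have v_gt0 : 0 < v by lra.
rewrite ler_pdivrMr // mulrAC ler_pdivlMr //.
have := concave_on_nonneg_chord (ltW u_gt0) le_uv v_gt0; nra.
Qed.

Lemma concave_slope_le_slope0 (u v : R) : 0 <= u -> u < v ->
  (p v - p u) / (v - u) <= (p v - p 0) / v.
Proof.
move=> u_ge0 lt_uv; have v_gt0 : 0 < v by lra.
rewrite ler_pdivrMr ?subr_gt0 // mulrAC ler_pdivlMr //.
have := concave_on_nonneg_chord u_ge0 (ltW lt_uv) v_gt0; nra.
Qed.

End ConcaveSlopes.

Section Superdifferential.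
Variables (R : realType) (p : R -> R) (p0 : R).
Hypotheses (p_concave : concave_on_nonneg p) (p_incr : increasing_on_nonneg p).
Hypothesis p_deriv0 : right_deriv p 0 p0.

Lemma right_deriv_ge0 (t l : R) : 0 <= t -> right_deriv p t l -> 0 <= l.
Proof.
move=> t_ge0 /cvgr_to_ge; apply; near=> h.
have h_gt0 : 0 < h by near: h; exact: nbhs_right_gt.
by rewrite divr_ge0 ?subr_ge0 ?(ltW h_gt0) //; apply: p_incr; lra.
Unshelve. all: by end_near.
Qed.

Lemma slope0_le_right_deriv0 (t : R) : 0 < t -> (p t - p 0) / t <= p0.
Proof.
move=> t_gt0; apply: (cvgr_to_ge p_deriv0); near=> s.
have s_gt0 : 0 < s by near: s; exact: nbhs_right_gt.
have s_lt_t : s < t by near: s; exact: nbhs_right_lt.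
by rewrite add0r; apply: concave_slope0_decreasing => //; exact: ltW.
Unshelve. all: by end_near.
Qed.

Lemma left_deriv_le_slope0 (t l : R) : 0 < t -> left_deriv p t l ->
  l <= (p t - p 0) / t.
Proof.
move=> t_gt0 /cvgr_to_le; apply; near=> h.
have h_lt0 : h < 0 by near: h; exact: nbhs_left_lt.
have h_gt : - t < h by near: h; apply: nbhs_left_gt; lra.
have -> : (p (t + h) - p t) / h = (p t - p (t + h)) / (t - (t + h)).
  by rewrite opprD addNKr invrN mulrN -mulNr opprB.
by apply: concave_slope_le_slope0 => //; lra.
Unshelve. all: by end_near.
Qed.

Lemma superdiff_bounds (t d : R) : 0 < t -> in_superdiff p t d -> 0 <= d <= p0.
Proof.
move=> t_gt0 [lr [ll [/(right_deriv_ge0 (ltW t_gt0)) lr_ge0 ll_le /andP[? ?]]]].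
have := left_deriv_le_slope0 t_gt0 ll_le; have := slope0_le_right_deriv0 t_gt0.
by move=> ? ?; apply/andP; split; lra.
Qed.

Lemma admissible_d_bounds n (x d : 'cV[R]_n) (i : 'I_n) :
  admissible_d p p0 x d -> 0 <= d i 0 <= p0.
Proof.
move=> /(_ i) [d_at0 d_sup]; have [x_eq0 | x_neq0] := eqVneq (x i 0) 0.
  by rewrite d_at0 // lexx andbT; exact: right_deriv_ge0 (lexx 0) p_deriv0.
by apply: (superdiff_bounds _ (d_sup x_neq0)); rewrite normr_gt0.
Qed.

Hypothesis p0_gt0 : 0 < p0.

Lemma Rmap_weight_bounds n (x d : 'cV[R]_n) (i : 'I_n) :
  admissible_d p p0 x d -> 0 <= 1 - d i 0 / p0 <= 1.
Proof.
move=> /(admissible_d_bounds i) /andP[d_ge0 d_le].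
have : 0 <= d i 0 / p0 by rewrite divr_ge0 // ltW.
have : d i 0 / p0 <= 1 by rewrite ler_pdivrMr // mul1r.
by move=> ? ?; apply/andP; split; lra.
Qed.

Lemma Rmap_norm_le1 n (x d : 'cV[R]_n) (i : 'I_n) :
  admissible_d p p0 x d -> `|Rmap p0 x d i 0| <= 1.
Proof.
move=> /(Rmap_weight_bounds i) /andP[w_ge0 w_le1].
rewrite mxE normrM normr_sg (ger0_norm w_ge0).
by case: (x i 0 != 0); rewrite ?mul1r ?mul0r.
Qed.

Lemma Rmap_mul_ge0 n (x d : 'cV[R]_n) (i : 'I_n) :
  admissible_d p p0 x d -> 0 <= Rmap p0 x d i 0 * x i 0.
Proof.
move=> /(Rmap_weight_bounds i) /andP[w_ge0 _].
by rewrite mxE mulrAC -normrEsg mulrC mulr_ge0.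
Qed.

End Superdifferential.

Section WeightedL1Recovery.
Variables (R : realType) (m n : nat) (A : 'M[R]_(m, n)) (T : {set 'I_n}).

Lemma unique_minimizer_of_strict (f : 'cV[R]_n -> R) (C : 'cV[R]_n -> Prop) z :
  C z -> (forall y, C y -> y != z -> f z < f y) -> is_unique_minimizer f C z.
Proof.
move=> Cz f_strict; split.
  split=> // y Cy; have [-> // | y_neq] := eqVneq y z.
  exact/ltW/f_strict.
move=> y [Cy y_min]; apply/eqP/negP => y_neq.
by have := f_strict y Cy (introT negP y_neq); have := y_min z Cz; lra.
Qed.

Lemma abs_sub_weighted_ge (r a y : R) : `|r| <= 1 -> 0 <= r * a ->
  - `|y - a| <= `|y| - `|a| - r * (y - a).
Proof.
move=> r_le1 ra_ge0.
have ra : r * a = `|r| * `|a| by rewrite -normrM ger0_norm.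
have ry : r * y <= `|r| * `|y| by rewrite -normrM ler_norm.
have tri : `|a| - `|y| <= `|y - a| by rewrite distrC lerB_dist.
have r_ge0 := normr_ge0 r.
have : 0 <= (1 - `|r|) * (`|y - a| - (`|a| - `|y|)) by apply: mulr_ge0; lra.
have : 0 <= `|r| * `|y - a| by apply: mulr_ge0.
nra.
Qed.

Hypothesis bp_recovery : forall xb : 'cV[R]_n, supported_on xb T ->
  is_unique_minimizer (@l1norm R n) (fun x => A *m x = A *m xb) xb.

Lemma null_space_property (h : 'cV[R]_n) : A *m h = 0 -> h != 0 ->
  \sum_(i in T) `|h i 0| < \sum_(i | i \notin T) `|h i 0|.
Proof.
move=> Ah_eq0 h_neq0.
pose v : 'cV[R]_n := \col_i (if i \in T then - h i 0 else 0).
pose w : 'cV[R]_n := \col_i (if i \in T then 0 else h i 0).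
have w_def : w = v + h.
  by apply/matrixP => i j; rewrite (ord1 j) !mxE; case: ifP => _; lra.
have Aw : A *m w = A *m v by rewrite w_def mulmxDr Ah_eq0 addr0.
have v_supp : supported_on v T.
  by move=> i; rewrite mxE; case: ifP => // _; rewrite eqxx.
have l1v : l1norm v = \sum_(i in T) `|h i 0|.
  by rewrite /l1norm [RHS]big_mkcond; apply: eq_bigr => i _; rewrite mxE; case: ifP;
    rewrite ?normrN ?normr0.
have l1w : l1norm w = \sum_(i | i \notin T) `|h i 0|.
  by rewrite /l1norm [RHS]big_mkcond; apply: eq_bigr => i _; rewrite mxE; case: ifP;
    rewrite ?normr0.
have [[_ v_min] v_unique] := bp_recovery v_supp.
rewrite -l1v -l1w lt_neqAle v_min // andbT; apply/eqP => l1_eq.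
have w_eq_v : w = v.
  by apply: v_unique; split=> // y Ay; rewrite -l1_eq; exact: v_min.
by move: h_neq0; rewrite -(addKr v h) -w_def w_eq_v addNr eqxx.
Qed.

Lemma weighted_l1_recovery (xb r : 'cV[R]_n) : supported_on xb T ->
  (forall i, `|r i 0| <= 1) -> (forall i, 0 <= r i 0 * xb i 0) ->
  (forall i, i \notin T -> r i 0 = 0) ->
  is_unique_minimizer (fun z => l1norm z - inner r z)
    (fun z => A *m z = A *m xb) xb.
Proof.
move=> xb_supp r_le1 r_sign r_offT.
apply: unique_minimizer_of_strict => // y Ay y_neq.
have h_ker : A *m (y - xb) = 0 by rewrite mulmxBr Ay subrr.
have h_neq0 : y - xb != 0 by rewrite subr_eq0.
rewrite -subr_gt0; apply: lt_le_trans (_ : 0 < _ - _) _.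
  by rewrite subr_gt0; exact: null_space_property h_ker h_neq0.
have -> : l1norm y - inner r y - (l1norm xb - inner r xb) =
    \sum_i (`|y i 0| - `|xb i 0| - r i 0 * (y i 0 - xb i 0)).
  rewrite /l1norm /inner !sumrB; under [X in _ = _ - X]eq_bigr do rewrite mulrBr.
  by rewrite sumrB; lra.
rewrite [X in _ <= X](bigID (mem T)) /= [X in _ <= X]addrC -sumrN.
apply: lerD; apply: ler_sum => i iT.
  have xb_eq0 : xb i 0 = 0 by apply/eqP; apply: contraNT iT => /xb_supp.
  by rewrite !mxE r_offT // xb_eq0 normr0 mul0r !subr0.
by rewrite !mxE; exact: abs_sub_weighted_ge.
Qed.

End WeightedL1Recovery.

Theorem theorem4p1 (R : realType) (m n : nat) (A : 'M[R]_(m, n))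
    (p : R -> R) (p0 : R) (T : {set 'I_n}) :
  concave_on_nonneg p ->
  increasing_on_nonneg p ->
  {within `[0, +oo[, continuous p} ->
  right_deriv p 0 p0 -> 0 < p0 ->
  (* basis pursuit uniquely recovers every vector supported on T *)
  (forall xb : 'cV[R]_n, supported_on xb T ->
     is_unique_minimizer (@l1norm R n) (fun x => A *m x = A *m xb) xb) ->
  forall (xb : 'cV[R]_n), supported_on xb T ->
  forall (x : nat -> 'cV[R]_n) (d : nat -> 'cV[R]_n),
    x 0%N = 0 ->
    (forall k, admissible_d p p0 (x k) (d k)) ->
    (forall k, is_minimizer
                 (fun z => l1norm z - inner (Rmap p0 (x k) (d k)) z)
                 (fun z => A *m z = A *m xb) (x k.+1)) ->
    forall k, is_unique_minimizer
                (fun z => l1norm z - inner (Rmap p0 (x k) (d k)) z)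
                (fun z => A *m z = A *m xb) xb
              /\ x k.+1 = xb.
Proof.
move=> p_concave p_incr _ p_deriv0 p0_gt0 bp xb xb_supp x d x0 d_adm x_min.
have step k : x k = 0 \/ x k = xb ->
    is_unique_minimizer (fun z => l1norm z - inner (Rmap p0 (x k) (d k)) z)
      (fun z => A *m z = A *m xb) xb.
  move=> xk; apply: (weighted_l1_recovery bp xb_supp) => [i|i|i iT].
  - exact: (Rmap_norm_le1 p_concave p_incr p_deriv0 p0_gt0 i (d_adm k)).
  - have := Rmap_mul_ge0 p_concave p_incr p_deriv0 p0_gt0 i (d_adm k).
    by case: xk => ->; rewrite ?mxE ?sgr0 ?mul0r.
  - have xb_eq0 : xb i 0 = 0 by apply/eqP; apply: contraNT iT => /xb_supp.
    by rewrite mxE; case: xk => ->; rewrite ?mxE ?xb_eq0 sgr0 mul0r.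
have x_cases k : x k = 0 \/ x k = xb.
  elim: k => [|k IH]; [by left | right; exact: (step k IH).2 _ (x_min k)].
by move=> k; split; [exact: step | exact: (step k (x_cases k)).2 _ (x_min k)].
Qed.
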